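(* Let $X$ be a finite simplicial complex, $d\ge 0$, and let $F^{\uparrow}:C_{d+1}(X)\to C_{d+1}(X)$ and $F^{\downarrow}:C_{d-1}(X)\to C_{d-1}(X)$ be smooth. Let $G_d(\theta)=B_d^\intercal F^{\downarrow}(B_d\theta)+B_{d+1}F^{\uparrow}(B_{d+1}^\intercal\theta)$ on $C_d(X)$. Then $G_d$ is exact if and only if the maps $P_{d+1}F^{\uparrow}P_{d+1}$ and $Q_{d-1}F^{\downarrow}Q_{d-1}$ are exact.
   Context: A finite simplicial complex $X$ on vertex set $\{1,\dots,n\}$ is a collection of nonempty subsets closed under taking nonempty subsets; $X_d$ is the set of simplices with $d+1$ vertices; a $d$-simplex with vertices $i_0<\dots<i_d$ is written $[i_0,\dots,i_d]$. $C_d(X)$ is the real vector space with basis $X_d$ and inner product making $X_d$ orthonormal ($C_{-1}(X)=0$). The boundary map is $\partial_d[i_0,\dots,i_d]=\sum_{k=0}^d(-1)^k[i_0,\dots,\widehat{i_k},\dots,i_d]$ with matrix $B_d$; $B_d^\intercal$ its transpose. $P_{d+1}$ is the orthogonal projection of $C_{d+1}(X)$ onto $\operatorname{im}(B_{d+1}^\intercal)$, and $Q_{d-1}$ is the orthogonal projection of $C_{d-1}(X)$ onto $\operatorname{im}(B_d)$. A vector field $F$ on a real inner product space $V$ is exact if $F=\nabla\phi$ for some smooth function $\phi:V\to\mathbb{R}$. *)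

From HB Require Import structures.
From mathcomp Require Import all_boot all_order all_algebra.
From mathcomp Require Import all_classical all_reals all_analysis.
Set Implicit Arguments. Unset Strict Implicit. Unset Printing Implicit Defensive.
Import Order.TTheory GRing.Theory Num.Theory.
Import numFieldNormedType.Exports.
Local Open Scope ring_scope.

Definition is_simplicial_complex (n : nat) (X : {set {set 'I_n}}) : Prop :=
  (forall s : {set 'I_n}, s \in X -> 0 < #|s|)%N /\
  (forall s t : {set 'I_n}, s \in X -> t \subset s -> (0 < #|t|)%N -> t \in X).

(* simplices with exactly k vertices; X_d = simplices X d.+1,
   and simplices X 0 is empty (so C_{-1}(X) = 0). *)
Definition simplices (n : nat) (X : {set {set 'I_n}}) (k : nat) : {set {set 'I_n}} :=
  [set s in X | #|s| == k].

(* C_{k-1}(X) = R^{simplices X k}, coordinates w.r.t. the orthonormal basis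
   of simplices, enumerated by enum_val. *)
Notation chain R X k := ('cV[R]_(#|simplices X k|)).

Definition boundary (R : realType) (n : nat) (X : {set {set 'I_n}}) (k : nat)
  : 'M[R]_(#|simplices X k|, #|simplices X k.+1|) :=
  \matrix_(i < #|simplices X k|, j < #|simplices X k.+1|)
    let s : {set 'I_n} := enum_val i in let t : {set 'I_n} := enum_val j in
    \sum_(v : 'I_n | (v \in t) && (s == t :\ v))
       (-1) ^+ #|[set u in t | (u < v)%N]|.

(* the orthogonal projection of x onto im(A) = { A z }, w.r.t. the standard
   inner product <u, v> = u^T v (the basis of simplices is orthonormal):
   the unique y in im(A) with x - y orthogonal to im(A). *)
Definition orth_proj (R : realType) (m k : nat) (A : 'M[R]_(m, k)) (x : 'cV[R]_m)
  : 'cV[R]_m :=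
  xget 0 [set y : 'cV[R]_m | (exists z : 'cV[R]_k, y = A *m z) /\
                             (forall z : 'cV[R]_k, (A *m z)^T *m (x - y) = 0)].

Definition iter_deriv (R : realType) (U V : normedModType R) (f : U -> V) (vs : seq U)
  : U -> V :=
  foldr (fun v g => 'D_v g) f vs.

Definition smooth (R : realType) (U V : normedModType R) (f : U -> V) : Prop :=
  forall (vs : seq U) (x : U), differentiable (iter_deriv f vs) x.

Definition grad (R : realType) (m : nat) (phi : 'cV[R]_m -> R^o) (x : 'cV[R]_m)
  : 'cV[R]_m :=
  \col_(i < m) 'D_(delta_mx i 0) phi x.

Definition exact_field (R : realType) (m : nat) (F : 'cV[R]_m -> 'cV[R]_m) : Prop :=
  exists phi : 'cV[R]_m -> R^o, smooth phi /\ forall x, F x = grad phi x.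

From HB Require Import structures.
From mathcomp Require Import all_boot all_order all_algebra.
From mathcomp Require Import all_classical all_reals all_analysis.
From mathcomp Require Import zify ring.
Import Order.TTheory GRing.Theory Num.Theory.
Import numFieldNormedType.Exports.
Local Open Scope ring_scope.

(* G_d(theta) = A^T F_up (A theta) + C^T F_down (C theta) with A = B_(d+1)^T and C = B_d,
   and C A^T = B_d B_(d+1) = 0.  The orthogonal projection P_A onto im A satisfies
   A^T P_A = A^T and P_A A = A, so if psi and chi are potentials of P_A F_up P_A and
   P_C F_down P_C, then psi (A theta) + chi (C theta) is a potential of G_d.  Conversely,
   C A^T = 0 yields a matrix M with A M = P_A and C M = 0; by the chain rule a potential of
   G_d composed with M is a potential of M^T G_d (M x) = P_A F_up (P_A x), and symmetrically
   for F_down. *)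

Section ColumnSpaceProjection.
Variable R : realType.

Lemma mulmx_trmx_eq0 p q (N : 'M[R]_(p, q)) : N *m N^T = 0 -> N = 0.
Proof.
move=> NNt0; apply/matrixP => i j; rewrite mxE.
have /eqP := congr1 (fun M : 'M[R]_p => M i i) NNt0; rewrite !mxE.
under eq_bigr do rewrite mxE -expr2.
rewrite psumr_eq0 => [/allP/(_ j (mem_index_enum _))|l _]; last exact: sqr_ge0.
by rewrite sqrf_eq0 => /eqP.
Qed.

Variables (m k : nat) (A : 'M[R]_(m, k)).

Lemma submx_gram : (A <= A^T *m A)%MS.
Proof.
have ker_gram : (kermx (A^T *m A) <= kermx A^T)%MS.
  rewrite sub_kermx; apply/eqP/mulmx_trmx_eq0.
  have /eqP K0 : kermx (A^T *m A) *m (A^T *m A) == 0 by rewrite -sub_kermx.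
  by rewrite trmx_mul trmxK mulmxA -(mulmxA _ A^T) K0 mul0mx.
have := mxrankS ker_gram; rewrite !mxrank_ker mxrank_tr => rk_le.
have rkA : (\rank A <= k)%N by apply: rank_leq_col.
have rkG : (\rank (A^T *m A) <= k)%N by apply: rank_leq_col.
have rk_gram : (\rank A <= \rank (A^T *m A))%N by lia.
have /leqifP := mxrank_leqif_eq (submxMl A^T A).
by case: ifP => [/andP[_ ->] // | _]; rewrite ltnNge rk_gram.
Qed.

Definition col_proj : 'M[R]_m := A *m pinvmx (A^T *m A) *m A^T.

Lemma col_proj_mulmx : col_proj *m A = A.
Proof. by rewrite /col_proj -mulmxA mulmxKpV // submx_gram. Qed.

Lemma trmx_col_proj : col_proj^T = col_proj.
Proof.
have PT : col_proj^T = A *m (A *m pinvmx (A^T *m A))^T by rewrite /col_proj trmx_mul trmxK.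
have idem : col_proj *m col_proj^T = col_proj^T by rewrite PT mulmxA col_proj_mulmx.
have idemT : col_proj *m col_proj^T = col_proj.
  by have := congr1 trmx idem; rewrite trmx_mul !trmxK.
by rewrite -[LHS]idem idemT.
Qed.

Lemma trmx_mul_col_proj : A^T *m col_proj = A^T.
Proof. by rewrite -trmx_col_proj -trmx_mul col_proj_mulmx. Qed.

Lemma orth_projE x : orth_proj A x = col_proj *m x.
Proof.
set W := pinvmx (A^T *m A) *m A^T.
have PE : col_proj = A *m W by rewrite /W mulmxA.
have orth z : (A *m z)^T *m (x - col_proj *m x) = 0.
  by rewrite trmx_mul -mulmxA mulmxBr mulmxA trmx_mul_col_proj subrr mulmx0.
apply: xget_unique => [|y /= [[z ->] orth_z]].
  by rewrite /=; split; [exists (W *m x); rewrite PE -mulmxA | exact: orth].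
set w := z - W *m x.
have Aw : A *m z - col_proj *m x = A *m w by rewrite mulmxBr PE -mulmxA.
suff Aw0 : A *m w = 0 by apply/eqP; rewrite -subr_eq0 Aw Aw0.
apply: trmx_inj; rewrite trmx0; apply: mulmx_trmx_eq0; rewrite trmxK.
have Aw_split : A *m w = (x - col_proj *m x) - (x - A *m z).
  by rewrite -Aw [RHS]addrC opprB addrA subrK.
by rewrite {2}Aw_split mulmxBr orth orth_z subrr.
Qed.

End ColumnSpaceProjection.

Arguments col_proj {R m k}.

Section LinearPrecomposition.
Variable R : realType.

Lemma continuous_sum (I : Type) (s : seq I) (T : topologicalType) (V : normedModType R)
    (f : I -> T -> V) :
  (forall i, continuous (f i)) -> continuous (fun x => \sum_(i <- s) f i x).
Proof.
move=> f_cont; elim: s => [|i s IHs].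
  under eq_fun do rewrite big_nil; exact: cst_continuous.
under eq_fun do rewrite big_cons.
by move=> x; apply: continuousD; [exact: f_cont | exact: IHs].
Qed.

Lemma continuous_mulmx {m k} (M : 'M[R]_(m, k)) : continuous (mulmx M : 'cV_k -> 'cV_m).
Proof.
have -> : mulmx M = fun x : 'cV_k => \sum_(j < k) x j 0 *: col j M.
  apply: funext => x; apply/matrixP => i l; rewrite (ord1 l) !mxE summxE.
  by apply: eq_bigr => j _; rewrite !mxE mulrC.
by apply: continuous_sum => j x; apply: continuousZr_tmp; exact: coord_continuous.
Qed.

Lemma differentiable_mulmx {m k} (M : 'M[R]_(m, k)) (x : 'cV[R]_k) : differentiable (mulmx M) x.
Proof. exact/linear_differentiable/continuous_mulmx. Qed.

Lemma derive_comp_mulmx {m k} (W : normedModType R) (g : 'cV[R]_m -> W) (M : 'M[R]_(m, k)) x v :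
  'D_v (fun y => g (M *m y)) x = 'D_(M *m v) g (M *m x).
Proof.
rewrite /derive /=.
suff -> : (fun h : R => h^-1 *: (g (M *m (h *: v + x)) - g (M *m x))) =
          (fun h : R => h^-1 *: (g (h *: (M *m v) + M *m x) - g (M *m x))) by [].
by apply: funext => h; rewrite mulmxDr scalemxAr.
Qed.

Lemma iter_deriv_comp_mulmx {m k} (W : normedModType R) (f : 'cV[R]_m -> W) (M : 'M[R]_(m, k)) vs :
  iter_deriv (fun y => f (M *m y)) vs = (fun y => iter_deriv f (map (mulmx M) vs) (M *m y)).
Proof.
elim: vs => [//|v vs IHvs] /=; rewrite IHvs; apply: funext => x; exact: derive_comp_mulmx.
Qed.

Lemma smooth_comp_mulmx {m k} (W : normedModType R) (f : 'cV[R]_m -> W) (M : 'M[R]_(m, k)) :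
  smooth f -> smooth (fun y => f (M *m y)).
Proof.
move=> f_smooth vs x; rewrite iter_deriv_comp_mulmx.
exact: differentiable_comp (differentiable_mulmx M x) (f_smooth _ _).
Qed.

Lemma iter_derivD (U W : normedModType R) (f g : U -> W) vs :
  smooth f -> smooth g ->
  iter_deriv (fun x => f x + g x) vs = (fun x => iter_deriv f vs x + iter_deriv g vs x).
Proof.
move=> f_smooth g_smooth; elim: vs => [//|v vs IHvs] /=; rewrite IHvs; apply: funext => x.
by apply: deriveD; apply: diff_derivable; [exact: f_smooth | exact: g_smooth].
Qed.

Lemma smoothD (U W : normedModType R) (f g : U -> W) :
  smooth f -> smooth g -> smooth (fun x => f x + g x).
Proof.
move=> f_smooth g_smooth vs x; rewrite iter_derivD //.
exact: differentiableD (f_smooth vs x) (g_smooth vs x).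
Qed.

Lemma gradD {m} (f g : 'cV[R]_m -> R^o) x :
  differentiable f x -> differentiable g x ->
  grad (fun y => f y + g y) x = grad f x + grad g x.
Proof.
move=> f_diff g_diff; apply/matrixP => i l; rewrite !mxE.
by apply: deriveD; apply: diff_derivable.
Qed.

Lemma grad_comp_mulmx {m k} (phi : 'cV[R]_m -> R^o) (M : 'M[R]_(m, k)) x :
  differentiable phi (M *m x) ->
  grad (fun y => phi (M *m y)) x = M^T *m grad phi (M *m x).
Proof.
move=> phi_diff; apply/matrixP => i l; rewrite !mxE derive_comp_mulmx deriveE //.
have -> : M *m delta_mx i 0 = \sum_(j < m) M j i *: (delta_mx j 0 : 'cV[R]_m).
  rewrite -colE; apply/matrixP => a b; rewrite (ord1 b) !mxE summxE.
  under eq_bigr do rewrite !mxE.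
  rewrite (bigD1 a) //= big1 => [|c ca]; first by rewrite !eqxx mulr1 addr0.
  by rewrite eq_sym (negbTE ca) mulr0.
rewrite linear_sum; apply: eq_bigr => j _; rewrite linearZ /= !mxE -deriveE //.
Qed.

End LinearPrecomposition.

Lemma sum_antisym_eq0 (R : numDomainType) (I : finType) (F : I -> I -> R) :
  (forall i j, F j i = - F i j) -> \sum_i \sum_j F i j = 0.
Proof.
move=> F_antisym; apply/eqP; rewrite -eqNr -sumrN exchange_big /=.
apply/eqP; apply: eq_bigr => i _; rewrite -sumrN; apply: eq_bigr => j _.
by rewrite F_antisym opprK.
Qed.

Section Boundary.
Variables (R : realType) (n : nat).

Definition face_sign (t : {set 'I_n}) (v : 'I_n) : R := (-1) ^+ #|[set u in t | (u < v)%N]|.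

Lemma face_signD1 (t : {set 'I_n}) v w : v \in t -> w != v ->
  face_sign (t :\ v) w = (-1) ^+ (v < w)%N * face_sign t w.
Proof.
move=> vt wv; rewrite /face_sign [in RHS](cardsD1 v) !inE vt /=.
have -> : [set u in t | (u < w)%N] :\ v = [set u in t :\ v | (u < w)%N].
  by apply/setP => u; rewrite !inE andbA.
by rewrite exprD mulrA -exprD addnn -[X in _ = X * _]signr_odd odd_double expr0 mul1r.
Qed.

Lemma boundary_boundary (X : {set {set 'I_n}}) k :
  is_simplicial_complex X -> boundary R X k *m boundary R X k.+1 = 0.
Proof.
move=> [_ X_closed]; apply/matrixP => i j; rewrite !mxE.
under eq_bigr do rewrite !mxE /=.
set r := enum_val i; set t := enum_val j.
have /[!inE] /andP[tX /eqP card_t] : t \in simplices X k.+2 := enum_valP j.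
have facet v : v \in t -> t :\ v \in simplices X k.+1.
  move=> vt; have card_tv : #|t :\ v| = k.+1.
    by move: card_t; rewrite (cardsD1 v t) vt add1n => -[].
  by rewrite inE card_tv eqxx andbT; apply: X_closed tX _ _; rewrite ?subsetDl ?card_tv.
under eq_bigr do rewrite big_distrr /= big_mkcondr /=.
rewrite exchange_big /=.
(* Removing v then w, or w then v, from t gives the same face with opposite signs. *)
pose F v w : R := if [&& v \in t, w \in t :\ v & r == t :\ v :\ w]
  then (-1) ^+ (v < w)%N * face_sign t w * face_sign t v else 0.
apply: (@etrans _ _ (\sum_v \sum_w F v w)); last first.
  apply: sum_antisym_eq0 => v w; rewrite /F !inE.
  have -> : t :\ w :\ v = t :\ v :\ w by rewrite !finset.setDDl finset.setUC.
  case: (eqVneq v w) => [-> | vw] /=; first by rewrite andbF oppr0.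
  case: (v \in t); case: (w \in t); case: (r == _) => //=; rewrite ?oppr0 //.
  have sign_swap : (-1) ^+ (w < v)%N = - (-1) ^+ (v < w)%N :> R.
    rewrite -signrN; congr (_ ^+ _).
    by case: (ltngtP v w) vw => // /val_inj ->; rewrite eqxx.
  by rewrite sign_swap; ring.
rewrite big_mkcond; apply: eq_bigr => v _; rewrite /F.
case: (boolP (v \in t)) => vt /=; last by rewrite big1.
rewrite -big_mkcond (big_pred1 (enum_rank_in (facet v vt) (t :\ v))) => [|s]; last first.
  apply/eqP/eqP => [s_tv|->]; last by rewrite enum_rankK_in ?facet.
  by apply: enum_val_inj; rewrite enum_rankK_in ?facet.
rewrite enum_rankK_in ?facet // big_distrl big_mkcond /=; apply: eq_bigr => w _.
case: ifP => // /andP[]; rewrite !inE => /andP[wv _] _.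
by rewrite -/(face_sign (t :\ v) w) -/(face_sign t v) face_signD1.
Qed.

End Boundary.

Section GradientFields.
Variable R : realType.

Definition pullback_field {m k} (A : 'M[R]_(m, k)) (F : 'cV[R]_m -> 'cV[R]_m) (theta : 'cV[R]_k)
  : 'cV[R]_k := A^T *m F (A *m theta).

Definition proj_field {m k} (A : 'M[R]_(m, k)) (F : 'cV[R]_m -> 'cV[R]_m) (x : 'cV[R]_m)
  : 'cV[R]_m := orth_proj A (F (orth_proj A x)).

Lemma pullback_proj_field {m k} (A : 'M[R]_(m, k)) F :
  pullback_field A (proj_field A F) = pullback_field A F.
Proof.
apply: funext => theta; rewrite /pullback_field /proj_field !orth_projE.
by rewrite mulmxA trmx_mul_col_proj mulmxA col_proj_mulmx.
Qed.

Lemma exact_field_pullback {m k} (A : 'M[R]_(m, k)) F :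
  exact_field F -> exact_field (pullback_field A F).
Proof.
move=> [phi [phi_smooth F_grad]]; exists (fun theta => phi (A *m theta)); split.
  exact: smooth_comp_mulmx.
by move=> theta; rewrite /pullback_field F_grad grad_comp_mulmx //; exact: (phi_smooth [::]).
Qed.

Lemma exact_fieldD {m} (F G : 'cV[R]_m -> 'cV[R]_m) :
  exact_field F -> exact_field G -> exact_field (fun x => F x + G x).
Proof.
move=> [phi [phi_smooth F_grad]] [psi [psi_smooth G_grad]].
exists (fun x => phi x + psi x); split; first exact: smoothD.
move=> x; rewrite gradD ?F_grad ?G_grad //.
- exact: (phi_smooth [::]).
- exact: (psi_smooth [::]).
Qed.

Lemma col_proj_factor {m k p} (A : 'M[R]_(m, k)) (C : 'M[R]_(p, k)) :
  C *m A^T = 0 -> exists M : 'M[R]_(k, m), A *m M = col_proj A /\ C *m M = 0.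
Proof.
(* The columns of M lie in im A^T, which C kills. *)
move=> CAt0; exists (col_proj A^T *m (pinvmx (A^T *m A) *m A^T)); split.
  by rewrite mulmxA -{1}[A]trmxK trmx_mul_col_proj trmxK mulmxA.
by rewrite /col_proj !mulmxA CAt0 !mul0mx.
Qed.

Lemma exact_field_proj {m k p} {A : 'M[R]_(m, k)} {C : 'M[R]_(p, k)} {F H} :
  C *m A^T = 0 ->
  exact_field (fun theta => pullback_field A F theta + pullback_field C H theta) ->
  exact_field (proj_field A F).
Proof.
move=> /col_proj_factor [M [AM CM]] /(exact_field_pullback M).
congr exact_field; apply: funext => x.
rewrite /pullback_field /proj_field mulmxDr !mulmxA -!trmx_mul AM CM trmx0 !mul0mx addr0.
by rewrite trmx_col_proj !orth_projE.
Qed.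

Lemma exact_field_pullbackDP {m k p} (A : 'M[R]_(m, k)) (C : 'M[R]_(p, k)) F H :
  C *m A^T = 0 ->
  exact_field (fun theta => pullback_field A F theta + pullback_field C H theta) <->
  exact_field (proj_field A F) /\ exact_field (proj_field C H).
Proof.
move=> CAt0; split=> [G_exact | [F_exact H_exact]].
  split; first exact: exact_field_proj CAt0 G_exact.
  have AtC0 : A *m C^T = 0 by rewrite -[A]trmxK -trmx_mul CAt0 trmx0.
  apply: (exact_field_proj AtC0).
  rewrite (_ : (fun _ => _) = fun theta => pullback_field A F theta + pullback_field C H theta) //.
  by apply: funext => theta; rewrite addrC.
rewrite -pullback_proj_field -[pullback_field C H]pullback_proj_field.
by apply: exact_fieldD; apply: exact_field_pullback.
Qed.

End GradientFields.

Arguments pullback_field {R m k}.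

Theorem mainTheorem6 (R : realType) (n : nat) (X : {set {set 'I_n}}) (d : nat)
  (Fup : chain R X d.+2 -> chain R X d.+2)
  (Fdown : chain R X d -> chain R X d) :
  is_simplicial_complex X ->
  smooth Fup -> smooth Fdown ->
  exact_field (fun theta : chain R X d.+1 =>
      (boundary R X d)^T *m Fdown (boundary R X d *m theta)
      + boundary R X d.+1 *m Fup ((boundary R X d.+1)^T *m theta))
  <->
  (exact_field (fun x : chain R X d.+2 =>
       orth_proj (boundary R X d.+1)^T (Fup (orth_proj (boundary R X d.+1)^T x)))
   /\
   exact_field (fun y : chain R X d =>
       orth_proj (boundary R X d) (Fdown (orth_proj (boundary R X d) y)))).
Proof.
move=> X_complex _ _.
set B0 := boundary R X d; set B1 := boundary R X d.+1.
have -> : (fun theta => B0^T *m Fdown (B0 *m theta) + B1 *m Fup (B1^T *m theta)) =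
          (fun theta => pullback_field B1^T Fup theta + pullback_field B0 Fdown theta).
  by apply: funext => theta; rewrite /pullback_field trmxK addrC.
by apply: exact_field_pullbackDP; rewrite trmxK; apply: boundary_boundary.
Qed.
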